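(* Let $q>0$, $\ell\in\{0,1,2,\ldots\}$ and $n\in\{1,2,3,\ldots\}$. Then $$\tilde\gamma_\ell^{(n)}(q)=(-1)^\ell\sum_{k=0}^{\ell}(-1)^k k!\binom{\ell}{k}s(n+1,k+1)\,\zeta_E^{(\ell-k)}(n+1,q),$$ where $\tilde\gamma_\ell^{(n)}$ denotes the $n$-th derivative of $\tilde\gamma_\ell$ with respect to $q$.
   Context: For $q>0$, $\zeta_E(z,q)=\sum_{n=0}^\infty (-1)^n (n+q)^{-z}$ for $\mathrm{Re}(z)>0$, extended by analytic continuation to an entire function of $z$; $\zeta_E^{(m)}(z,q)$ denotes $\frac{\partial^m}{\partial z^m}\zeta_E(z,q)$. The modified Stieltjes constants $\tilde\gamma_k(q)$ are defined by the Taylor expansion $\zeta_E(z,q)=\sum_{k=0}^\infty\frac{(-1)^k\tilde\gamma_k(q)}{k!}(z-1)^k$. $s(n,k)$ are the (signed) Stirling numbers of the first kind: $x(x-1)\cdots(x-n+1)=\sum_{k=0}^n s(n,k)x^k$. *)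

From Stdlib Require Import Reals ZArith.
From Coquelicot Require Import Coquelicot.
Open Scope R_scope.

(* zeta_E(z,q) = sum_{n>=0} (-1)^n (n+q)^(-z), for real z > 0 and q > 0
   (the series converges there; Series is the limit of partial sums). *)
Definition zetaE (z q : R) : R :=
  Series (fun n : nat => (-1) ^ n * Rpower (INR n + q) (- z)).

Definition zetaE_deriv (m : nat) (z q : R) : R :=
  Derive_n (fun w => zetaE w q) m z.

(* Modified Stieltjes constants: Taylor coefficients of zeta_E(., q) at z = 1,
   zeta_E(z,q) = sum_k (-1)^k gt_k(q)/k! (z-1)^k, i.e.
   gt_k(q) = (-1)^k * d^k/dz^k zeta_E(z,q) at z = 1. *)
Definition gamma_tilde (k : nat) (q : R) : R :=
  (-1) ^ k * zetaE_deriv k 1 q.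

(* Signed Stirling numbers of the first kind:
   x(x-1)...(x-n+1) = sum_k s(n,k) x^k, via the standard recurrence
   s(n+1,k+1) = s(n,k) - n s(n,k+1). *)
Fixpoint stirling1 (n k : nat) : Z :=
  match n, k with
  | O, O => 1%Z
  | O, S _ => 0%Z
  | S _, O => 0%Z
  | S n', S k' => (stirling1 n' k' - Z.of_nat n' * stirling1 n' (S k'))%Z
  end.

(* For z > 0 the alternating series defining zetaE z q is regrouped as
     f 0 - f 1 + f 2 / 2 + 1/2 * sum_j (f (2j+2) - 2 f (2j+3) + f (2j+4)),   f x = (x + q)^(-z).
   The second differences of the kernels lnpow m z x = (-ln x)^m x^(-z) are O(x^-2) locally
   uniformly in z > 0, so the regrouped series can be differentiated termwise in z and in q.
   Since d/dz lnpow m = lnpow (m+1) and d/dx lnpow m z = -m lnpow (m-1) (z+1) - z lnpow m (z+1),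
   the z-derivatives Z_m(z,q) of zetaE obey the same "lowering" relation in q:
     d/dq Z_m(z,q) = -m Z_(m-1)(z+1,q) - z Z_m(z+1,q).
   Iterating it n times from Z_l(1,q) = (-1)^l gamma_tilde_l(q), the Stirling recurrence
   s(n+2,k+1) = s(n+1,k) - (n+1) s(n+1,k+1) together with (k+1)! C(l,k+1) = k! C(l,k) (l-k)
   produces the stated sum. *)

From Stdlib Require Import Reals ZArith Lra Lia.
From Coquelicot Require Import Coquelicot.
Open Scope R_scope.

Lemma sum_inv_sq_le N : sum_f_R0 (fun n => / (INR n + 1) ^ 2) N <= 2 - / (INR N + 1).
Proof.
  induction N as [|N IH]; [simpl; lra|].
  rewrite tech5, S_INR.
  assert (HN : 0 <= INR N) by apply pos_INR.
  assert (/ (INR N + 1 + 1) ^ 2 <= / (INR N + 1) - / (INR N + 1 + 1)).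
  { replace (/ (INR N + 1) - / (INR N + 1 + 1))
      with (/ ((INR N + 1) * (INR N + 1 + 1))) by (field; lra).
    apply Rinv_le_contravar; nra. }
  lra.
Qed.

Lemma ex_series_inv_sq : ex_series (fun n => / (INR n + 1) ^ 2).
Proof.
  destruct (ex_finite_lim_seq_incr (sum_n (fun n => / (INR n + 1) ^ 2)) 2) as [l Hl].
  - intros n. rewrite sum_Sn, <- (Rplus_0_r (sum_n _ n)) at 1. apply Rplus_le_compat_l.
    apply Rlt_le, Rinv_0_lt_compat, pow_lt. pose proof (pos_INR (S n)). lra.
  - intros n. rewrite sum_n_Reals. eapply Rle_trans; [apply sum_inv_sq_le|].
    assert (0 < / (INR n + 1)) by (apply Rinv_0_lt_compat; pose proof (pos_INR n); lra).
    lra.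
  - exists l. exact Hl.
Qed.

Lemma ex_series_Rabs_le (a b : nat -> R) :
  (forall n, Rabs (a n) <= b n) -> ex_series b -> ex_series a.
Proof. exact (@ex_series_le R_AbsRing R_CompleteNormedModule a b). Qed.

Lemma Rabs_Series_le (a b : nat -> R) :
  (forall n, Rabs (a n) <= b n) -> ex_series b -> Rabs (Series a) <= Series b.
Proof.
  intros Hab Hb.
  assert (Habs : ex_series (fun n => Rabs (a n))).
  { apply (ex_series_Rabs_le _ b); [|exact Hb]. intros n. rewrite Rabs_Rabsolu. apply Hab. }
  eapply Rle_trans; [now apply Series_Rabs|].
  apply Series_le; [|exact Hb]. intros n. split; [apply Rabs_pos | apply Hab].
Qed.

Lemma Series_tail_lt (a : nat -> R) eps :
  ex_series a -> 0 < eps -> exists N, Rabs (Series (fun k => a (S N + k)%nat)) < eps.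
Proof.
  intros Ha Heps.
  destruct (proj1 (is_lim_seq_Reals _ _) (Series_correct _ Ha) eps Heps) as [N HN].
  exists N. specialize (HN N (le_n N)).
  unfold R_dist in HN. rewrite sum_n_Reals in HN.
  rewrite (Series_incr_n a (S N)) in HN by (lia || exact Ha).
  simpl pred in HN. rewrite Rabs_minus_sym in HN.
  replace (sum_f_R0 a N + Series (fun k => a (S N + k)%nat) - sum_f_R0 a N)
    with (Series (fun k => a (S N + k)%nat)) in HN by ring.
  exact HN.
Qed.

Section Filters.

Context {T : Type} (F : (T -> Prop) -> Prop) {FF : Filter F}.

Lemma filterlim_sum_f_R0_0 (e : nat -> T -> R) N :
  (forall j, filterlim (e j) F (locally 0)) ->
  filterlim (fun h => sum_f_R0 (fun j => e j h) N) F (locally 0).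
Proof.
  intros He. induction N as [|N IH]; [apply He|].
  rewrite <- (Rplus_0_r 0).
  apply (filterlim_comp_2 _ _ Rplus IH (He (S N))).
  exact (@filterlim_plus R_AbsRing R_NormedModule 0 0).
Qed.

Lemma filterlim_Series_dominated (e : nat -> T -> R) (M : nat -> R) :
  (forall j, filterlim (e j) F (locally 0)) ->
  F (fun h => forall j, Rabs (e j h) <= M j) ->
  ex_series M ->
  filterlim (fun h => Series (fun j => e j h)) F (locally 0).
Proof.
  intros He Hdom HM. apply filterlim_locally. intros eps.
  assert (Heps2 : 0 < eps / 2) by (generalize (cond_pos eps); lra).
  destruct (Series_tail_lt M (eps / 2) HM Heps2) as [N HN].
  pose proof (proj1 (filterlim_locally _ 0) (filterlim_sum_f_R0_0 e N He) (mkposreal _ Heps2))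
    as Hfin.
  generalize (filter_and _ _ Hdom Hfin). apply filter_imp. intros h [Hh Hfinh].
  change (Rabs (Series (fun j => e j h) - 0) < eps).
  change (Rabs (sum_f_R0 (fun j => e j h) N - 0) < eps / 2) in Hfinh.
  assert (Heh : ex_series (fun j => e j h)) by exact (ex_series_Rabs_le _ M Hh HM).
  rewrite (Series_incr_n _ (S N)) by (lia || exact Heh). simpl pred.
  assert (Htail : Rabs (Series (fun k => e (S N + k)%nat h))
                  <= Series (fun k => M (S N + k)%nat)).
  { apply Rabs_Series_le; [intros k; apply Hh | now apply ex_series_incr_n]. }
  pose proof (Rle_abs (Series (fun k => M (S N + k)%nat))).
  rewrite Rminus_0_r in *.
  pose proof (Rabs_triang (sum_f_R0 (fun j => e j h) N) (Series (fun k => e (S N + k)%nat h))).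
  lra.
Qed.

End Filters.

Lemma is_derive_diff_quotient (f : R -> R) x l :
  is_derive f x l <->
  filterlim (fun h => (f (x + h) - f x) / h - l) (locally' 0) (locally 0).
Proof.
  rewrite is_derive_Reals, filterlim_locally. split.
  - intros Hf eps. destruct (Hf eps (cond_pos eps)) as [d Hd].
    exists d. intros h Hh Hh0.
    change (Rabs ((f (x + h) - f x) / h - l - 0) < eps). rewrite Rminus_0_r.
    apply Hd; [exact Hh0|]. change (Rabs (h - 0) < d) in Hh. now rewrite Rminus_0_r in Hh.
  - intros Hf eps Heps. destruct (Hf (mkposreal _ Heps)) as [d Hd].
    exists d. intros h Hh0 Hh.
    assert (H := Hd h). change (Rabs (h - 0) < d -> h <> 0 ->
      Rabs ((f (x + h) - f x) / h - l - 0) < eps) in H.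
    rewrite !Rminus_0_r in H. now apply H.
Qed.

Lemma Rabs_diff_quotient_le (f f' : R -> R) t0 r B h :
  (forall t, Rabs (t - t0) < r -> is_derive f t (f' t) /\ Rabs (f' t) <= B) ->
  h <> 0 -> Rabs h < r -> Rabs ((f (t0 + h) - f t0) / h - f' t0) <= 2 * B.
Proof.
  intros Hf Hh0 Hh.
  assert (Hinc : Rabs (f (t0 + h) - f t0) <= B * Rabs (t0 + h - t0)).
  { apply (bounded_variation _ f'). intros t Ht. apply Hf.
    eapply Rle_lt_trans; [exact Ht|]. now rewrite Rplus_minus_l. }
  rewrite Rplus_minus_l in Hinc.
  pose proof (Rabs_pos_lt h Hh0).
  assert (Ht0 : Rabs (t0 - t0) < r) by (rewrite Rminus_diag, Rabs_R0; lra).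
  pose proof (proj2 (Hf t0 Ht0)).
  eapply Rle_trans; [apply Rabs_triang|]. rewrite Rabs_Ropp.
  unfold Rdiv. rewrite Rabs_mult, Rabs_inv.
  apply (Rmult_le_compat_r (/ Rabs h)) in Hinc; [|apply Rlt_le, Rinv_0_lt_compat; lra].
  rewrite Rmult_assoc, Rinv_r, Rmult_1_r in Hinc by lra. lra.
Qed.

Lemma is_derive_Series (F F' : nat -> R -> R) (M : nat -> R) t0 r :
  0 < r ->
  (forall j t, Rabs (t - t0) < r -> is_derive (F j) t (F' j t)) ->
  (forall j t, Rabs (t - t0) < r -> Rabs (F' j t) <= M j) ->
  ex_series M ->
  (forall t, Rabs (t - t0) < r -> ex_series (fun j => F j t)) ->
  is_derive (fun t => Series (fun j => F j t)) t0 (Series (fun j => F' j t0)).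
Proof.
  intros Hr HF HM HMs HFs.
  assert (Ht0 : Rabs (t0 - t0) < r) by (rewrite Rminus_diag, Rabs_R0; lra).
  assert (HF's : ex_series (fun j => F' j t0)) by (apply (ex_series_Rabs_le _ M); auto).
  set (e := fun j h => (F j (t0 + h) - F j t0) / h - F' j t0).
  assert (Hdom : forall j h, h <> 0 -> Rabs h < r -> Rabs (e j h) <= 2 * M j).
  { intros j h. apply Rabs_diff_quotient_le. intros t Ht. split; [apply HF | apply HM]; exact Ht. }
  apply is_derive_diff_quotient.
  apply (filterlim_ext_loc (fun h => Series (fun j => e j h))).
  - exists (mkposreal _ Hr). intros h Hh Hh0.
    change (Rabs (h - 0) < r) in Hh. rewrite Rminus_0_r in Hh.
    assert (Hh' : Rabs (t0 + h - t0) < r) by now rewrite Rplus_minus_l.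
    assert (Hsh : ex_series (fun j => F j (t0 + h))) by now apply HFs.
    assert (Hs0 : ex_series (fun j => F j t0)) by now apply HFs.
    assert (Hdiff : ex_series (fun j => F j (t0 + h) - F j t0))
      by exact (ex_series_minus _ _ Hsh Hs0).
    unfold e, Rdiv.
    rewrite Series_minus; [| now apply ex_series_scal_r | exact HF's].
    now rewrite Series_scal_r, Series_minus.
  - apply (filterlim_Series_dominated _ e (fun j => 2 * M j)).
    + intros j. apply is_derive_diff_quotient, HF, Ht0.
    + exists (mkposreal _ Hr). intros h Hh Hh0 j.
      change (Rabs (h - 0) < r) in Hh. rewrite Rminus_0_r in Hh. now apply Hdom.
    + now apply (ex_series_scal_l 2 M).
Qed.

Lemma is_derive_shift (f : R -> R) x t d :
  is_derive f (x + t) d -> is_derive (fun t => f (x + t)) t d.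
Proof.
  intros Hf. rewrite <- (Rmult_1_l d).
  apply (is_derive_comp f (fun t => x + t)); [exact Hf | auto_derive; auto].
Qed.

Lemma is_derive_sum_f_R0 (f : nat -> R -> R) (d : nat -> R) x N :
  (forall k, (k <= N)%nat -> is_derive (f k) x (d k)) ->
  is_derive (fun y => sum_f_R0 (fun k => f k y) N) x (sum_f_R0 d N).
Proof.
  intros Hf. apply (is_derive_ext (fun y => sum_n (fun k => f k y) N)).
  - intros y. apply sum_n_Reals.
  - rewrite <- sum_n_Reals. exact (@is_derive_sum_n R_AbsRing R_NormedModule f N x d Hf).
Qed.

Lemma locally_of_forall_pos (P : R -> Prop) x : 0 < x -> (forall y, 0 < y -> P y) -> locally x P.
Proof.
  intros Hx HP. exists (mkposreal x Hx). intros y Hy. apply HP.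
  change (Rabs (y - x) < x) in Hy. split_Rabs; lra.
Qed.

Lemma Rabs_sub_le_of_derive (f f' : R -> R) a b B : a <= b ->
  (forall t, a <= t <= b -> is_derive f t (f' t)) ->
  (forall t, a <= t <= b -> Rabs (f' t) <= B) ->
  Rabs (f b - f a) <= B * (b - a).
Proof.
  intros Hab Hf Hf'.
  destruct (MVT_abs f f' a b) as [c [Hc Hcab]].
  { rewrite Rmin_left, Rmax_right by exact Hab.
    intros t Ht. now apply is_derive_Reals, Hf. }
  rewrite Rmin_left, Rmax_right in Hcab by exact Hab.
  rewrite Hc, (Rabs_pos_eq (b - a)) by lra.
  apply Rmult_le_compat_r; [lra | now apply Hf'].
Qed.

Definition diff2 (f : R -> R) (x : R) : R := f x - 2 * f (x + 1) + f (x + 2).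

Lemma Rabs_diff2_le (f f' f'' : R -> R) x B :
  (forall t, x <= t <= x + 2 -> is_derive f t (f' t)) ->
  (forall t, x <= t <= x + 2 -> is_derive f' t (f'' t)) ->
  (forall t, x <= t <= x + 2 -> Rabs (f'' t) <= B) ->
  Rabs (diff2 f x) <= B.
Proof.
  intros Hf Hf' Hf''.
  assert (Hstep : forall t, x <= t <= x + 1 ->
            is_derive (fun s => f (s + 1) - f s) t (f' (t + 1) - f' t)).
  { intros t Ht. apply (is_derive_minus (fun s => f (s + 1)) f).
    - rewrite <- (Rmult_1_l (f' (t + 1))).
      apply (is_derive_comp f (fun s => s + 1)); [apply Hf; lra | auto_derive; auto].
    - apply Hf; lra. }
  assert (Hstep' : forall t, x <= t <= x + 1 -> Rabs (f' (t + 1) - f' t) <= B).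
  { intros t Ht. rewrite <- (Rmult_1_r B). replace 1 with (t + 1 - t) at 2 by ring.
    apply (Rabs_sub_le_of_derive _ f''); [lra | |]; intros s Hs; [apply Hf' | apply Hf'']; lra. }
  pose proof (Rabs_sub_le_of_derive _ _ x (x + 1) B ltac:(lra) Hstep Hstep') as H.
  unfold diff2. replace (x + 2) with (x + 1 + 1) by ring.
  replace (B * (x + 1 - x)) with B in H by ring.
  replace (f x - 2 * f (x + 1) + f (x + 1 + 1))
    with (f (x + 1 + 1) - f (x + 1) - (f (x + 1) - f x)) by ring.
  exact H.
Qed.

Definition grouped (f : R -> R) : R :=
  f 0 - f 1 + f 2 / 2 + Series (fun j => diff2 f (2 * INR j + 2)) / 2.

Lemma sum_alt_grouped (u : nat -> R) N :
  sum_f_R0 (fun n => (-1) ^ n * u n) (2 * N + 3) =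
  u 0%nat - u 1%nat + (u 2%nat - u (2 * N + 4)%nat) / 2
  + sum_f_R0 (fun j => u (2 * j + 2)%nat - 2 * u (2 * j + 3)%nat + u (2 * j + 4)%nat) N / 2.
Proof.
  induction N as [|N IH]; [simpl; field|].
  replace (2 * S N + 3)%nat with (S (S (2 * N + 3))) by lia.
  rewrite tech5, tech5, IH, tech5.
  replace (S (S (2 * N + 3))) with (S (2 * (N + 2))) by lia.
  replace (S (2 * N + 3)) with (2 * (N + 2))%nat by lia.
  rewrite pow_1_odd, pow_1_even.
  replace (2 * (N + 2))%nat with (2 * S N + 2)%nat by lia.
  replace (S (2 * S N + 2)) with (2 * S N + 3)%nat by lia.
  replace (2 * N + 4)%nat with (2 * S N + 2)%nat by lia.
  replace (2 * S N + 4)%nat with (S (2 * S N + 3)) by lia.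
  field.
Qed.

Lemma is_series_alt_grouped (f : R -> R) :
  is_lim_seq (fun n => f (INR n)) 0 ->
  ex_series (fun j => diff2 f (2 * INR j + 2)) ->
  is_series (fun n => (-1) ^ n * f (INR n)) (grouped f).
Proof.
  intros Hf HD. set (u := fun n => f (INR n)).
  set (D := fun j => u (2 * j + 2)%nat - 2 * u (2 * j + 3)%nat + u (2 * j + 4)%nat).
  assert (HDu : forall j, diff2 f (2 * INR j + 2) = D j).
  { intros j. unfold D, u, diff2.
    replace (INR (2 * j + 2)) with (2 * INR j + 2) by (rewrite plus_INR, mult_INR; simpl; ring).
    replace (INR (2 * j + 3)) with (2 * INR j + 2 + 1) by (rewrite plus_INR, mult_INR; simpl; ring).
    replace (INR (2 * j + 4)) with (2 * INR j + 2 + 2) by (rewrite plus_INR, mult_INR; simpl; ring).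
    reflexivity. }
  unfold grouped. rewrite (Series_ext _ _ HDu).
  apply (ex_series_ext _ _ HDu) in HD.
  replace (f 0) with (u 0%nat) by reflexivity.
  replace (f 1) with (u 1%nat) by reflexivity.
  replace (f 2) with (u 2%nat) by (unfold u; f_equal; simpl; ring).
  change (is_series (fun n => (-1) ^ n * u n) (u 0%nat - u 1%nat + u 2%nat / 2 + Series D / 2)).
  apply is_series_Reals. intros eps Heps.
  destruct (proj1 (is_lim_seq_Reals _ _) (Series_correct _ HD) eps Heps) as [N1 HN1].
  destruct (proj1 (is_lim_seq_Reals u 0) Hf eps Heps) as [N2 HN2].
  exists (2 * (N1 + N2) + 3)%nat. intros n Hn. unfold R_dist.
  assert (Hcase : exists N, (N1 + N2 <= N)%nat /\ (n = 2 * N + 3 \/ n = 2 * N + 4)%nat).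
  { destruct (even_odd_cor n) as [p [Hp|Hp]]; [exists (p - 2)%nat | exists (p - 1)%nat]; lia. }
  destruct Hcase as [N [HN Hn']].
  specialize (HN1 N ltac:(lia)). specialize (HN2 (2 * N + 4)%nat ltac:(lia)).
  unfold R_dist in HN1, HN2. rewrite sum_n_Reals in HN1.
  pose proof (sum_alt_grouped u N) as Hodd. fold D in Hodd.
  destruct Hn' as [-> | ->].
  - rewrite Hodd. split_Rabs; lra.
  - replace (2 * N + 4)%nat with (S (2 * N + 3)) at 1 by lia.
    rewrite tech5, Hodd.
    replace (S (2 * N + 3)) with (2 * (N + 2))%nat by lia. rewrite pow_1_even.
    replace (2 * (N + 2))%nat with (2 * N + 4)%nat by lia.
    split_Rabs; lra.
Qed.

Lemma is_derive_diff2_param (F F' : R -> R -> R) t x :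
  (forall y, x <= y -> is_derive (fun t => F t y) t (F' t y)) ->
  is_derive (fun t => diff2 (F t) x) t (diff2 (F' t) x).
Proof.
  intros HF. unfold diff2.
  exact (@is_derive_plus R_AbsRing R_NormedModule _ _ _ _ _
           (@is_derive_minus R_AbsRing R_NormedModule _ _ _ _ _
              (HF x ltac:(lra)) (is_derive_scal _ _ 2 _ (HF (x + 1) ltac:(lra))))
           (HF (x + 2) ltac:(lra))).
Qed.

Lemma is_derive_grouped (F F' : R -> R -> R) (M : nat -> R) t0 r :
  0 < r ->
  (forall t x, Rabs (t - t0) < r -> 0 <= x -> is_derive (fun t => F t x) t (F' t x)) ->
  (forall j t, Rabs (t - t0) < r -> Rabs (diff2 (F' t) (2 * INR j + 2)) <= M j) ->
  ex_series M ->
  (forall t, Rabs (t - t0) < r -> ex_series (fun j => diff2 (F t) (2 * INR j + 2))) ->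
  is_derive (fun t => grouped (F t)) t0 (grouped (F' t0)).
Proof.
  intros Hr HF HM HMs HFs.
  assert (Ht0 : Rabs (t0 - t0) < r) by (rewrite Rminus_diag, Rabs_R0; lra).
  assert (HS : is_derive (fun t => Series (fun j => diff2 (F t) (2 * INR j + 2))) t0
                         (Series (fun j => diff2 (F' t0) (2 * INR j + 2)))).
  { apply (is_derive_Series (fun j t => diff2 (F t) (2 * INR j + 2))
                             (fun j t => diff2 (F' t) (2 * INR j + 2)) M t0 r Hr);
      [|assumption..].
    intros j t Ht. apply is_derive_diff2_param. intros y Hy.
    apply HF; [exact Ht|]. pose proof (pos_INR j). lra. }
  unfold grouped.
  exact (@is_derive_plus R_AbsRing R_NormedModule _ _ _ _ _
           (@is_derive_plus R_AbsRing R_NormedModule _ _ _ _ _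
              (@is_derive_minus R_AbsRing R_NormedModule _ _ _ _ _
                 (HF t0 0 Ht0 ltac:(lra)) (HF t0 1 Ht0 ltac:(lra)))
              (@is_derive_scal_l R_AbsRing R_NormedModule _ _ _ (/ 2) (HF t0 2 Ht0 ltac:(lra))))
           (@is_derive_scal_l R_AbsRing R_NormedModule _ _ _ (/ 2) HS)).
Qed.

Definition lnpow (m : nat) (z x : R) : R := (- ln x) ^ m * exp (- (z * ln x)).

(* At [m = 0] the truncated [m - 1] is harmless: that term is multiplied by [INR 0]. *)
Definition lower (K : nat -> R -> R -> R) (m : nat) (z x : R) : R :=
  - INR m * K (m - 1)%nat (z + 1) x - z * K m (z + 1) x.

Lemma lnpow_dz m z x : is_derive (fun z => lnpow m z x) z (lnpow (S m) z x).
Proof. unfold lnpow. auto_derive; [easy | simpl; ring]. Qed.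

Lemma lnpow_dx m z x : 0 < x -> is_derive (lnpow m z) x (lower lnpow m z x).
Proof.
  intros Hx. unfold lnpow, lower. auto_derive; [easy|].
  replace (- ((z + 1) * ln x)) with (- (z * ln x) + - ln x) by ring.
  rewrite exp_plus, (exp_Ropp (ln x)), exp_ln by exact Hx.
  destruct m as [|m]; [simpl; field; lra|].
  replace (S m - 1)%nat with m by lia. simpl. field. lra.
Qed.

Lemma lower_dx (K : nat -> R -> R -> R) :
  (forall m z x, 0 < x -> is_derive (K m z) x (lower K m z x)) ->
  forall m z x, 0 < x -> is_derive (lower K m z) x (lower (lower K) m z x).
Proof.
  intros HK m z x Hx. unfold lower at 1 3.
  apply (is_derive_minus (fun x => - INR m * K (m - 1)%nat (z + 1) x)
                         (fun x => z * K m (z + 1) x)); apply is_derive_scal; now apply HK.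
Qed.

Lemma Rabs_lower_le (K : nat -> R -> R -> R) m z x B : 0 <= z ->
  Rabs (K (m - 1)%nat (z + 1) x) <= B -> Rabs (K m (z + 1) x) <= B ->
  Rabs (lower K m z x) <= (INR m + z) * B.
Proof.
  intros Hz H1 H2. pose proof (pos_INR m). unfold lower.
  eapply Rle_trans; [apply Rabs_triang|].
  rewrite Rabs_Ropp, !Rabs_mult, Rabs_Ropp, (Rabs_pos_eq (INR m)), (Rabs_pos_eq z) by assumption.
  rewrite Rmult_plus_distr_r.
  apply Rplus_le_compat; apply Rmult_le_compat_l; assumption.
Qed.

Lemma pow_le_exp k a y : 0 < a -> 0 <= y -> y ^ k <= (INR k / a) ^ k * exp (a * y).
Proof.
  intros Ha Hy. destruct k as [|k].
  - simpl. pose proof (exp_ineq1_le (a * y)). nra.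
  - set (K := INR (S k)). assert (HK : 0 < K) by (apply lt_0_INR; lia).
    set (s := a / K * y).
    assert (Hs : 0 <= s) by (unfold s; apply Rmult_le_pos; [apply Rlt_le, Rdiv_lt_0_compat|]; lra).
    replace y with (K / a * s) by (unfold s; field; lra).
    replace (a * (K / a * s)) with (K * s) by (field; lra).
    rewrite Rpow_mult_distr.
    apply Rmult_le_compat_l; [apply pow_le, Rlt_le, Rdiv_lt_0_compat; lra|].
    replace (exp (K * s)) with (exp s ^ S k)
      by (rewrite <- Rpower_pow by apply exp_pos; unfold Rpower; now rewrite ln_exp).
    apply pow_incr. pose proof (exp_ineq1_le s). lra.
Qed.

Lemma Rabs_lnpow_le m a k w x : 0 < a -> (k <= m)%nat -> 2 + a <= w -> 1 <= x ->
  Rabs (lnpow k w x) <= (INR m / a + 1) ^ m / x ^ 2.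
Proof.
  intros Ha Hk Hw Hx.
  assert (Hl : 0 <= ln x) by (rewrite <- ln_1; apply ln_le; lra).
  assert (Hinva : 0 <= / a) by (apply Rlt_le, Rinv_0_lt_compat, Ha).
  assert (Hka : 0 <= INR k / a) by (apply Rmult_le_pos; [apply pos_INR | exact Hinva]).
  assert (Hkm : INR k / a <= INR m / a)
    by (apply Rmult_le_compat_r; [exact Hinva | now apply le_INR]).
  assert (Hconst : (INR k / a) ^ k <= (INR m / a + 1) ^ m).
  { apply Rle_trans with ((INR m / a + 1) ^ k); [apply pow_incr; lra|].
    apply Rle_pow; [lra | exact Hk]. }
  assert (Hx2 : / x ^ 2 = exp (- (2 * ln x))).
  { rewrite exp_Ropp, <- (Rpower_pow 2 x) by lra. reflexivity. }
  unfold lnpow. rewrite Rabs_mult, <- RPow_abs, Rabs_Ropp, (Rabs_pos_eq (ln x)) by exact Hl.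
  rewrite (Rabs_pos_eq (exp _)) by (apply Rlt_le, exp_pos).
  unfold Rdiv. rewrite Hx2.
  apply Rle_trans with ((INR k / a) ^ k * exp (a * ln x) * exp (- (w * ln x))).
  - apply Rmult_le_compat_r; [apply Rlt_le, exp_pos | now apply pow_le_exp].
  - rewrite Rmult_assoc, <- exp_plus.
    apply Rmult_le_compat; [apply pow_le; lra | apply Rlt_le, exp_pos | exact Hconst|].
    assert (Hexp : a * ln x + - (w * ln x) <= - (2 * ln x)) by nra.
    destruct (Rle_lt_or_eq_dec _ _ Hexp) as [Hlt | ->]; [now apply Rlt_le, exp_increasing | lra].
Qed.

Lemma lnpow_lower2_le m a A : 0 < a -> exists C, 0 <= C /\
  forall k z t, (k <= m)%nat -> a <= z <= A -> 1 <= t ->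
  Rabs (lower (lower lnpow) k z t) <= C / t ^ 2.
Proof.
  intros Ha. set (c := (INR m / a + 1) ^ m).
  assert (Hc : 0 <= c).
  { apply pow_le. pose proof (pos_INR m). pose proof (Rinv_0_lt_compat a Ha).
    unfold Rdiv. nra. }
  pose proof (pos_INR m). pose proof (Rle_abs A). pose proof (Rabs_pos A).
  exists ((INR m + Rabs A) * (INR m + Rabs A + 1) * c). split.
  { apply Rmult_le_pos; [apply Rmult_le_pos|]; lra. }
  intros k z t Hk Hz Ht.
  assert (Hd : 0 <= c / t ^ 2)
    by (apply Rmult_le_pos; [exact Hc | apply Rlt_le, Rinv_0_lt_compat, pow_lt; lra]).
  assert (HL : forall j, (j <= m)%nat -> Rabs (lnpow j (z + 1 + 1) t) <= c / t ^ 2).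
  { intros j Hj. apply Rabs_lnpow_le; lra || lia. }
  assert (HL1 : forall j, (j <= m)%nat ->
            Rabs (lower lnpow j (z + 1) t) <= (INR m + z + 1) * (c / t ^ 2)).
  { intros j Hj. eapply Rle_trans; [apply Rabs_lower_le; [lra | apply HL; lia | apply HL; lia]|].
    apply Rmult_le_compat_r; [exact Hd|]. apply le_INR in Hj. lra. }
  eapply Rle_trans; [apply Rabs_lower_le; [lra | apply HL1; lia | apply HL1; lia]|].
  apply le_INR in Hk. unfold Rdiv at 2. rewrite Rmult_assoc. fold (c / t ^ 2).
  rewrite <- Rmult_assoc.
  apply Rmult_le_compat_r; [exact Hd|].
  pose proof (pos_INR k). apply Rmult_le_compat; lra.
Qed.

Lemma lnpow_diff2_le m a A : 0 < a -> exists C, 0 <= C /\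
  forall k z x, (k <= m)%nat -> a <= z <= A -> 1 <= x ->
  Rabs (diff2 (lnpow k z) x) <= C / x ^ 2.
Proof.
  intros Ha. destruct (lnpow_lower2_le m a A Ha) as [C [HC0 HC]].
  exists C. split; [exact HC0|]. intros k z x Hk Hz Hx.
  apply (Rabs_diff2_le _ (lower lnpow k z) (lower (lower lnpow) k z)).
  - intros t Ht. apply lnpow_dx. lra.
  - intros t Ht. apply lower_dx; [exact lnpow_dx | lra].
  - intros t Ht. eapply Rle_trans; [apply HC; lra || lia|].
    apply Rmult_le_compat_l; [exact HC0|].
    apply Rinv_le_contravar; [apply pow_lt; lra | apply pow_incr; lra].
Qed.

Lemma diff2_shift (f : R -> R) q y : diff2 (fun x => f (x + q)) y = diff2 f (y + q).
Proof.
  unfold diff2.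
  now replace (y + 1 + q) with (y + q + 1) by ring; replace (y + 2 + q) with (y + q + 2) by ring.
Qed.

Lemma lnpow_diff2_sample_le m a A : 0 < a -> exists C,
  forall k z q j, (k <= m)%nat -> a <= z <= A -> 0 <= q ->
  Rabs (diff2 (fun x => lnpow k z (x + q)) (2 * INR j + 2)) <= C / (INR j + 1) ^ 2.
Proof.
  intros Ha. destruct (lnpow_diff2_le m a A Ha) as [C [HC0 HC]].
  exists C. intros k z q j Hk Hz Hq. rewrite diff2_shift.
  pose proof (pos_INR j).
  eapply Rle_trans; [apply HC; lra || lia|].
  apply Rmult_le_compat_l; [exact HC0|].
  apply Rinv_le_contravar; [apply pow_lt; lra | apply pow_incr; lra].
Qed.

Lemma ex_series_lnpow_diff2 m z q : 0 < z -> 0 <= q ->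
  ex_series (fun j => diff2 (fun x => lnpow m z (x + q)) (2 * INR j + 2)).
Proof.
  intros Hz Hq. destruct (lnpow_diff2_sample_le m z z Hz) as [C HC].
  apply (ex_series_Rabs_le _ (fun j => C * / (INR j + 1) ^ 2)).
  - intros j. apply HC; lra || lia.
  - apply (ex_series_scal_l C (fun j => / (INR j + 1) ^ 2)), ex_series_inv_sq.
Qed.

Lemma is_lim_seq_lnpow0 z q : 0 < z -> is_lim_seq (fun n => lnpow 0 z (INR n + q)) 0.
Proof.
  intros Hz.
  assert (Hx : is_lim_seq (fun n => INR n + q) p_infty).
  { apply (is_lim_seq_plus _ _ p_infty q); [apply is_lim_seq_INR | apply is_lim_seq_const | easy]. }
  assert (Hln : is_lim_seq (fun n => ln (INR n + q)) p_infty).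
  { apply (is_lim_comp_seq ln _ p_infty); [apply is_lim_ln_p | now exists 0%nat | exact Hx]. }
  assert (Hlnz : is_lim_seq (fun n => ln (INR n + q) * z) p_infty).
  { rewrite <- (is_Rbar_mult_unique p_infty z p_infty) by now apply is_Rbar_mult_p_infty_pos.
    now apply is_lim_seq_scal_r. }
  apply (is_lim_seq_ext (fun n => exp (- (ln (INR n + q) * z)))).
  - intros n. unfold lnpow. simpl. rewrite (Rmult_comm z). ring.
  - apply (is_lim_comp_seq exp _ m_infty); [apply is_lim_exp_m | now exists 0%nat|].
    now apply (is_lim_seq_opp _ p_infty).
Qed.

Lemma diff2_lower (K : nat -> R -> R -> R) m z t y :
  diff2 (fun x => lower K m z (x + t)) y
  = lower (fun m z y => diff2 (fun x => K m z (x + t)) y) m z y.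
Proof. unfold diff2, lower. ring. Qed.

Lemma grouped_lower (K : nat -> R -> R -> R) m z q :
  ex_series (fun j => diff2 (fun x => K (m - 1)%nat (z + 1) (x + q)) (2 * INR j + 2)) ->
  ex_series (fun j => diff2 (fun x => K m (z + 1) (x + q)) (2 * INR j + 2)) ->
  grouped (fun x => lower K m z (x + q))
  = lower (fun m z q => grouped (fun x => K m z (x + q))) m z q.
Proof.
  intros H1 H2. unfold grouped.
  rewrite (Series_ext _ _ (fun j => diff2_lower K m z q (2 * INR j + 2))).
  unfold lower. rewrite Series_minus, !Series_scal_l.
  - field.
  - exact (ex_series_scal_l (- INR m) _ H1).
  - exact (ex_series_scal_l z _ H2).
Qed.

Definition zetaE_grouped (m : nat) (z q : R) : R := grouped (fun x => lnpow m z (x + q)).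

Lemma zetaE_grouped_dz m z q : 0 < z -> 0 <= q ->
  is_derive (fun z => zetaE_grouped m z q) z (zetaE_grouped (S m) z q).
Proof.
  intros Hz Hq. destruct (lnpow_diff2_sample_le (S m) (z / 2) (3 * z / 2)) as [C HC]; [lra|].
  apply (is_derive_grouped (fun z x => lnpow m z (x + q)) (fun z x => lnpow (S m) z (x + q))
           (fun j => C * / (INR j + 1) ^ 2) z (z / 2)).
  - lra.
  - intros t x _ _. apply lnpow_dz.
  - intros j t Ht. apply HC; [lia | split_Rabs; lra | exact Hq].
  - apply (ex_series_scal_l C (fun j => / (INR j + 1) ^ 2)), ex_series_inv_sq.
  - intros t Ht. apply ex_series_lnpow_diff2; [split_Rabs; lra | exact Hq].
Qed.

Lemma zetaE_grouped_dq m z q : 0 < z -> 0 < q ->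
  is_derive (zetaE_grouped m z) q (lower zetaE_grouped m z q).
Proof.
  intros Hz Hq. destruct (lnpow_diff2_sample_le m (z + 1) (z + 1)) as [C HC]; [lra|].
  unfold zetaE_grouped at 2. rewrite <- grouped_lower by (apply ex_series_lnpow_diff2; lra).
  apply (is_derive_grouped (fun t x => lnpow m z (x + t)) (fun t x => lower lnpow m z (x + t))
           (fun j => (INR m + z) * (C * / (INR j + 1) ^ 2)) q (q / 2)).
  - lra.
  - intros t x Ht Hx. apply is_derive_shift, lnpow_dx. split_Rabs; lra.
  - intros j t Ht. rewrite diff2_lower.
    apply Rabs_lower_le; [lra | apply HC; [lia | lra | split_Rabs; lra] ..].
  - apply (ex_series_scal_l (INR m + z) (fun j => C * / (INR j + 1) ^ 2)).
    apply (ex_series_scal_l C (fun j => / (INR j + 1) ^ 2)), ex_series_inv_sq.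
  - intros t Ht. apply ex_series_lnpow_diff2; [lra | split_Rabs; lra].
Qed.

Lemma zetaE_eq_grouped z q : 0 < z -> 0 <= q -> zetaE z q = zetaE_grouped 0 z q.
Proof.
  intros Hz Hq. apply is_series_unique.
  apply (is_series_ext (fun n => (-1) ^ n * lnpow 0 z (INR n + q))).
  { intros n. unfold lnpow, Rpower. simpl. rewrite Rmult_1_l, Ropp_mult_distr_l. reflexivity. }
  apply is_series_alt_grouped.
  - apply is_lim_seq_lnpow0, Hz.
  - now apply ex_series_lnpow_diff2.
Qed.

Lemma zetaE_deriv_eq_grouped m z q : 0 < z -> 0 <= q -> zetaE_deriv m z q = zetaE_grouped m z q.
Proof.
  intros Hz Hq. unfold zetaE_deriv. revert z Hz.
  induction m as [|m IH]; intros z Hz; [now apply zetaE_eq_grouped|].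
  simpl. rewrite (Derive_ext_loc _ (fun w => zetaE_grouped m w q)).
  - now apply is_derive_unique, zetaE_grouped_dz.
  - apply locally_of_forall_pos; [exact Hz | exact IH].
Qed.

Lemma IZR_stirling1_succ n k :
  IZR (stirling1 (S n) (S k)) = IZR (stirling1 n k) - INR n * IZR (stirling1 n (S k)).
Proof. simpl. now rewrite minus_IZR, mult_IZR, <- INR_IZR_INZ. Qed.

Lemma fact_mul_C_succ l k : (k < l)%nat ->
  INR (fact (S k)) * Binomial.C l (S k) = INR (fact k) * Binomial.C l k * INR (l - k).
Proof.
  intros Hk. unfold Binomial.C.
  replace (l - k)%nat with (S (l - S k)) by lia.
  rewrite (fact_simpl (l - S k)), fact_simpl, !mult_INR.
  pose proof (INR_fact_neq_0 k). pose proof (INR_fact_neq_0 (l - S k)).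
  assert (INR (S k) <> 0) by (apply not_0_INR; lia).
  assert (INR (S (l - S k)) <> 0) by (apply not_0_INR; lia).
  field. tauto.
Qed.

Lemma sum_f_R0_shift (u v : nat -> R) L :
  v 0%nat = 0 -> (forall k, (k < L)%nat -> v (S k) = u k) ->
  sum_f_R0 v L = sum_f_R0 u L - u L.
Proof.
  intros H0 HS. induction L as [|L IH]; [simpl; rewrite H0; ring|].
  rewrite !tech5, IH, HS by (lia || (intros k Hk; apply HS; lia)). ring.
Qed.

Definition stirling_sum (K : nat -> R -> R -> R) (l n : nat) (q : R) : R :=
  sum_f_R0 (fun k => (-1) ^ k * INR (fact k) * Binomial.C l k *
                     IZR (stirling1 (n + 1) (k + 1)) * K (l - k)%nat (INR n + 1) q) l.

Lemma stirling_sum_lower (K : nat -> R -> R -> R) l n q :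
  sum_f_R0 (fun k => (-1) ^ k * INR (fact k) * Binomial.C l k *
                     IZR (stirling1 (n + 1) (k + 1)) * lower K (l - k)%nat (INR n + 1) q) l
  = stirling_sum K l (S n) q.
Proof.
  set (b := fun k => (-1) ^ k * INR (fact k) * Binomial.C l k).
  set (s := fun k => IZR (stirling1 (S n) k)).
  set (g := fun j => K j (INR n + 1 + 1) q).
  set (u := fun k => b k * s (S k) * - INR (l - k) * g (l - k - 1)%nat).
  set (v := fun k => b k * s k * g (l - k)%nat).
  set (w := fun k => b k * s (S k) * g (l - k)%nat).
  assert (Hlhs : forall k, (-1) ^ k * INR (fact k) * Binomial.C l k *
                   IZR (stirling1 (n + 1) (k + 1)) * lower K (l - k)%nat (INR n + 1) q
                   = u k - w k * (INR n + 1)).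
  { intros k. unfold u, w, b, s, g, lower.
    replace (n + 1)%nat with (S n) by lia. replace (k + 1)%nat with (S k) by lia. ring. }
  assert (Hrhs : forall k, (-1) ^ k * INR (fact k) * Binomial.C l k *
                   IZR (stirling1 (S n + 1) (k + 1)) * K (l - k)%nat (INR (S n) + 1) q
                   = v k - w k * (INR n + 1)).
  { intros k. unfold v, w, b, s, g.
    replace (S n + 1)%nat with (S (S n)) by lia. replace (k + 1)%nat with (S k) by lia.
    rewrite IZR_stirling1_succ, S_INR. ring. }
  unfold stirling_sum.
  rewrite (sum_eq _ _ l (fun k _ => Hlhs k)), (sum_eq _ _ l (fun k _ => Hrhs k)).
  rewrite !minus_sum, <- !scal_sum. f_equal.
  rewrite (sum_f_R0_shift u v l).
  - unfold u. rewrite Nat.sub_diag. simpl INR. ring.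
  - unfold v, s. simpl stirling1. ring.
  - intros k Hk. unfold u, v, b.
    replace (l - S k)%nat with (l - k - 1)%nat by lia. simpl pow.
    replace (-1 * (-1) ^ k * INR (fact (S k)) * Binomial.C l (S k))
      with (- (-1) ^ k * (INR (fact (S k)) * Binomial.C l (S k))) by ring.
    rewrite fact_mul_C_succ by exact Hk. ring.
Qed.

Section Lowering.

Variable K : nat -> R -> R -> R.
Hypothesis K_dq : forall m z q, 0 < z -> 0 < q -> is_derive (K m z) q (lower K m z q).

Lemma stirling_sum_dq l n q : 0 < q ->
  is_derive (stirling_sum K l n) q (stirling_sum K l (S n) q).
Proof.
  intros Hq. rewrite <- stirling_sum_lower. unfold stirling_sum.
  apply (is_derive_sum_f_R0 (fun k q => (-1) ^ k * INR (fact k) * Binomial.C l k *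
           IZR (stirling1 (n + 1) (k + 1)) * K (l - k)%nat (INR n + 1) q)).
  intros k _. apply is_derive_scal, K_dq; [pose proof (pos_INR n); lra | exact Hq].
Qed.

Lemma stirling_sum_0 l q : stirling_sum K l 0 q = K l 1 q.
Proof.
  unfold stirling_sum. replace (INR 0 + 1) with 1 by (simpl; ring).
  destruct l as [|l]; [unfold Binomial.C; simpl; field|].
  rewrite decomp_sum, sum_eq_R0 by (lia || (intros k _; rewrite !Nat.add_1_r; simpl; ring)).
  unfold Binomial.C. rewrite Nat.sub_0_r.
  change (stirling1 (0 + 1) (0 + 1)) with 1%Z. change (fact 0) with 1%nat.
  pose proof (INR_fact_neq_0 (S l)). simpl. field. assumption.
Qed.

Lemma Derive_n_lowering l n q : 0 < q -> Derive_n (K l 1) n q = stirling_sum K l n q.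
Proof.
  revert q. induction n as [|n IH]; intros q Hq; [symmetry; apply stirling_sum_0|].
  simpl. rewrite (Derive_ext_loc _ (stirling_sum K l n)).
  - apply is_derive_unique, stirling_sum_dq, Hq.
  - apply locally_of_forall_pos; [exact Hq | exact IH].
Qed.

End Lowering.

Theorem theorem3p15 (q : R) (l n : nat) (hq : 0 < q) (hn : (1 <= n)%nat) :
  Derive_n (fun x => gamma_tilde l x) n q =
  (-1) ^ l *
  sum_f_R0 (fun k => (-1) ^ k * INR (fact k) * Binomial.C l k *
                     IZR (stirling1 (n + 1) (k + 1)) *
                     zetaE_deriv (l - k) (INR n + 1) q) l.
Proof.
  assert (Hn1 : 0 < INR n + 1) by (pose proof (pos_INR n); lra).
  rewrite (Derive_n_ext_loc _ (fun x => (-1) ^ l * zetaE_grouped l 1 x)).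
  - rewrite Derive_n_scal_l, Derive_n_lowering by (exact zetaE_grouped_dq || exact hq).
    f_equal. apply sum_eq. intros k _.
    now rewrite zetaE_deriv_eq_grouped by lra.
  - apply locally_of_forall_pos; [exact hq|]. intros y Hy.
    unfold gamma_tilde. now rewrite zetaE_deriv_eq_grouped by lra.
Qed.
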